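(* Let $a_0=0$ and let $a_1<a_2<a_3<\cdots$ be the increasing enumeration of $\mathcal{A}=\{m\ge1:\ c_m=1\}$. Let $(b_n)_{n\ge0}$ be defined by $b_0=0$, $b_{2n}=4b_n$, $b_{2n+1}=4b_n+2$. Then for every integer $k\ge 0$ and every $r\in\{-1,0,1,2\}$ with $4k+r\ge 0$, $$a_{4k+r}=4b_k+r.$$
   Context: For $n\in\mathbb{N}$ let $s_2(n)$ be the sum of the binary digits of $n$ and $t_n=s_2(n)\bmod 2$ (the Prouhet–Thue–Morse sequence). Let $F(X)=\sum_{n\ge1}t_nX^n\in\mathbb{F}_2[[X]]$ and let $G(X)=\sum_{n\ge1}c_nX^n\in\mathbb{F}_2[[X]]$ be its compositional inverse, i.e. $F(G(X))=G(F(X))=X$. The $c_n$ are identified with integers in $\{0,1\}$. Note that $b_n$ is the integer whose base-4 expansion is obtained from the binary expansion of $n$ by replacing each digit $1$ by $2$. *)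

From HB Require Import structures.
From mathcomp Require Import all_boot all_order all_algebra.
Set Implicit Arguments. Unset Strict Implicit. Unset Printing Implicit Defensive.
Import Order.TTheory GRing.Theory Num.Theory.

(* s_2(n): sum of binary digits of n (bits i < n suffice since n < 2^n). *)
Definition s2 (n : nat) : nat := \sum_(i < n) (n %/ 2 ^ i %% 2).

Definition tm (n : nat) : nat := s2 n %% 2.

Local Open Scope ring_scope.

Definition Ftrunc (N : nat) : {poly 'F_2} := \poly_(i < N) (tm i)%:R.

Definition ser_trunc (c : nat -> 'F_2) (N : nat) : {poly 'F_2} := \poly_(i < N) c i.

(* G = sum_{n>=1} c_n X^n is the compositional inverse of F in F_2[[X]]:
   c_0 = 0 and F(G(X)) = G(F(X)) = X.  Since F and G have no constant term,
   the n-th coefficient of F(G(X)) is that of the composition of the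
   truncations to degree <= n. *)
Definition is_comp_inverse (c : nat -> 'F_2) : Prop :=
  c 0%N = 0 /\
  (forall n : nat, (Ftrunc n.+1 \Po ser_trunc c n.+1)`_n = (n == 1%N)%:R) /\
  (forall n : nat, (ser_trunc c n.+1 \Po Ftrunc n.+1)`_n = (n == 1%N)%:R).

(* a_j = m, where a_0 = 0 and a_1 < a_2 < ... enumerates A = {m >= 1 : c_m = 1}:
   for j >= 1, m is in A and exactly j-1 elements of A are smaller than m. *)
Definition enum_at (c : nat -> 'F_2) (j m : nat) : Prop :=
  if j == 0%N then m = 0%N
  else [/\ (1 <= m)%N, c m = 1 &
        #|[set i : 'I_m | (1 <= (i : nat))%N && (c i == 1)]| = j.-1].

From HB Require Import structures.
From mathcomp Require Import all_boot all_order all_algebra.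
From mathcomp Require Import ring zify.
Import Order.TTheory GRing.Theory Num.Theory.
Set Implicit Arguments. Unset Strict Implicit. Unset Printing Implicit Defensive.
Local Open Scope ring_scope.

(* Since [t_(2n) = t_n] and [t_(2n+1) = 1 + t_n], the series [F] satisfies
   [F = (1 + X) F^2 + X / (1 + X)^2] over F_2, so its inverse [G] solves
   [(1 + G)^2 X = (1 + G)^3 X^2 + G], and this equation has only one solution
   without constant term.  The series [B = sum_k X^(b_k)] satisfies
   [B = (1 + X^2) B^4], from which one checks that the series [G] defined by
   [X (1 + G) = 1 + (1 + X)^3 B(X^4)] is that solution.  Hence, for [m >= 1],
   [c_m = 1] exactly when [(m + 1) div 4] is a value of [b]: the set [A] is the
   union of the blocks [{4 b_k - 1, ..., 4 b_k + 2}] (for [k = 0] just [{1, 2}]),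
   and counting its elements below [4 b_k + r] gives the enumeration. *)

Section TruncatedCongruence.

Variable R : nzRingType.
Implicit Types p q : {poly R}.

Definition eqmodX (N : nat) p q := take_poly N p = take_poly N q.

Lemma eqmodXP N p q : eqmodX N p q <-> forall i, (i < N)%N -> p`_i = q`_i.
Proof.
split=> [pq i ltiN | pq].
  by have := congr1 (coefp i) pq; rewrite /= !coef_take_poly ltiN.
by apply/polyP=> i; rewrite !coef_take_poly; case: ifP => // /pq.
Qed.

Lemma eqmodX_subr0 N p q : eqmodX N (p - q) 0 <-> eqmodX N p q.
Proof.
rewrite /eqmodX raddfB take_poly0r.
split=> [/eqP | pq]; first by rewrite subr_eq0 => /eqP.
by apply/eqP; rewrite subr_eq0; apply/eqP.
Qed.

Lemma eqmodXD N p q p' q' :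
  eqmodX N p p' -> eqmodX N q q' -> eqmodX N (p + q) (p' + q').
Proof. by move=> pp' qq'; rewrite /eqmodX in pp' qq' *; rewrite !take_polyD pp' qq'. Qed.

Lemma eqmodXM N p q p' q' :
  eqmodX N p p' -> eqmodX N q q' -> eqmodX N (p * q) (p' * q').
Proof.
move=> /eqmodXP pp' /eqmodXP qq'; apply/eqmodXP => i ltiN; rewrite !coefM.
apply: eq_bigr => j _; rewrite pp' ?qq' //.
  by rewrite (leq_ltn_trans _ ltiN) ?leq_subr.
by rewrite (leq_ltn_trans _ ltiN) // -ltnS.
Qed.

Lemma eqmodXX N p p' k : eqmodX N p p' -> eqmodX N (p ^+ k) (p' ^+ k).
Proof. by move=> pp'; elim: k => [//|k IHk]; rewrite !exprS; apply: eqmodXM. Qed.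

Lemma eqmodX_mulXn N p q : eqmodX N p q <-> exists r, p - q = r * 'X^N.
Proof.
rewrite -eqmodX_subr0 /eqmodX take_poly0r; split=> [pq | [r ->]].
  by exists (drop_poly N (p - q)); rewrite -{1}(poly_take_drop N (p - q)) pq add0r.
exact: take_polyMXn_0.
Qed.

Lemma poly_coef0_eq0 q : q`_0 = 0 -> q = drop_poly 1 q * 'X.
Proof.
move=> q0; rewrite -{1}(poly_take_drop 1 q) expr1.
suff -> : take_poly 1 q = 0 by rewrite add0r.
by apply/polyP=> -[|i]; rewrite coef_take_poly coef0.
Qed.

Lemma eqmodX_poly M N (f : nat -> R) :
  (M <= N)%N -> eqmodX M (\poly_(i < N) f i) (\poly_(i < M) f i).
Proof.
by move=> leMN; apply/eqmodXP => i ltiM; rewrite !coef_poly ltiM (leq_trans ltiM).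
Qed.

Lemma eqmodX_mulXn2 n N p q :
  eqmodX (n + N) ('X^n * p) ('X^n * q) <-> eqmodX N p q.
Proof.
split=> /eqmodXP pq; apply/eqmodXP => i ltiN.
  by have := pq (n + i)%N; rewrite !coefXnM ltn_add2l ltiN ltnNge leq_addr addKn; apply.
by rewrite !coefXnM; case: ltnP => // leni; rewrite pq // -(ltn_add2l n) subnKC.
Qed.

End TruncatedCongruence.

Lemma eqmodX_comp (R : comNzRingType) N (p p' q q' : {poly R}) : q`_0 = 0 ->
  eqmodX N p p' -> eqmodX N q q' -> eqmodX N (p \Po q) (p' \Po q').
Proof.
move=> q0 /eqmodX_mulXn[r pp'] qq'; apply: (@etrans _ _ (take_poly N (p' \Po q))).
  apply/eqmodX_mulXn; exists ((r \Po q) * drop_poly 1 q ^+ N).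
  by rewrite -comp_polyB pp' comp_polyM comp_Xn_poly {2}(poly_coef0_eq0 q0) exprMn mulrA.
apply/eqmodXP => i ltiN; rewrite !coef_comp_poly; apply: eq_bigr => j _.
by have /eqmodXP -> := eqmodXX j qq'.
Qed.

Lemma eqmodX_cancel (R : idomainType) N (p u : {poly R}) :
  u`_0 != 0 -> eqmodX N (p * u) 0 -> eqmodX N p 0.
Proof.
move=> u0 /eqmodXP pu0; apply/eqmodXP => i; elim/ltn_ind: i => i IHi ltiN.
move: (pu0 _ ltiN); rewrite coefM big_ord_recr /= subnn coef0 big1 ?add0r => [|j _].
  by move/eqP; rewrite mulf_eq0 (negbTE u0) orbF => /eqP.
by rewrite IHi ?coef0 ?mul0r // (ltn_trans _ ltiN).
Qed.

Lemma coef_sum_Xn_comp (R : nzRingType) d (p : {poly R}) n : (0 < d)%N ->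
  (\sum_(j < d) 'X^j * (p \Po 'X^d))`_n = p`_(n %/ d).
Proof.
move=> d_gt0; rewrite coef_sum (bigD1 (Ordinal (ltn_pmod n d_gt0))) //=.
rewrite coefXnM coef_comp_poly_Xn // ltnNge leq_mod /=.
have -> : (n - n %% d = n %/ d * d)%N by rewrite {1}(divn_eq n d) addnK.
rewrite dvdn_mull // mulnK // big1 ?addr0 // => j /eqP/val_eqP /= neq_j.
rewrite coefXnM coef_comp_poly_Xn //; case: ltnP => // lejn.
by rewrite -eqn_mod_dvd // (modn_small (ltn_ord j)) eq_sym (negbTE neq_j).
Qed.

Definition inv_residual (R : comNzRingType) (C : {poly R}) : {poly R} :=
  (1 + C) ^+ 2 * 'X - (1 + C) ^+ 3 * 'X ^+ 2 - C.

Lemma inv_residual_uniq (R : idomainType) N (C G : {poly R}) :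
  eqmodX N (inv_residual C) 0 -> eqmodX N (inv_residual G) 0 -> eqmodX N C G.
Proof.
move=> resC resG; apply/eqmodX_subr0.
(* [U] is the difference quotient of [inv_residual] at [C] and [G]. *)
pose U : {poly R} := 'X * (2%:R + C + G)
  - 'X ^+ 2 * (3%:R + 3%:R * (C + G) + C ^+ 2 + C * G + G ^+ 2) - 1.
apply: (@eqmodX_cancel _ _ _ U).
  by rewrite !coefB coefXM coefXnM coef1 /= subrr sub0r oppr_eq0 oner_eq0.
have -> : (C - G) * U = inv_residual C - inv_residual G by rewrite /U /inv_residual; ring.
by apply/eqmodX_subr0; rewrite /eqmodX in resC resG *; rewrite resC resG.
Qed.

Section BooleanCoefficients.

Variable R : comNzRingType.
Hypothesis pchar2_R : 2%N \in [pchar R].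
Hypothesis sqrr_id : forall a : R, a ^+ 2 = a.

Lemma sqr_poly_comp (p : {poly R}) : p ^+ 2 = p \Po 'X^2.
Proof.
have pchar2_poly : 2%N \in [pchar {poly R}] by rewrite pchar_poly.
elim/poly_ind: p => [|p a IHp]; first by rewrite comp_poly0 expr0n.
rewrite sqrrD (mulrn_pchar pchar2_poly) addr0 -polyC_exp sqrr_id.
by rewrite comp_polyD comp_polyC comp_polyM comp_polyX exprMn IHp.
Qed.

Lemma exp4_poly_comp (p : {poly R}) : p ^+ 4 = p \Po 'X^4.
Proof.
rewrite (exprM p 2 2) (sqr_poly_comp (p ^+ 2)) (sqr_poly_comp p).
by rewrite -comp_polyA comp_Xn_poly -exprM.
Qed.

End BooleanCoefficients.

Notation P2 := {poly 'F_2}.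

Lemma pchar2_F2 : 2%N \in [pchar 'F_2].
Proof. exact: pchar_Fp. Qed.

Lemma pchar2_polyF2 : 2%N \in [pchar P2].
Proof. by rewrite pchar_poly pchar2_F2. Qed.

Lemma sqrF2 (x : 'F_2) : x ^+ 2 = x.
Proof. by case: x => -[|[|//]] ? ; apply/val_inj. Qed.

Lemma sqr_polyF2 (p : P2) : p ^+ 2 = p \Po 'X^2.
Proof. exact: sqr_poly_comp pchar2_F2 sqrF2 p. Qed.

Lemma exp4_polyF2 (p : P2) : p ^+ 4 = p \Po 'X^4.
Proof. exact: exp4_poly_comp pchar2_F2 sqrF2 p. Qed.

Lemma sum_divn (P : pred nat) d n s : (s <= d)%N ->
  (\sum_(i < d * n + s) P (i %/ d) = d * \sum_(j < n) P j + s * P n)%N.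
Proof.
have block m t : (t <= d)%N ->
    (\sum_(d * m <= i < d * m + t) P (i %/ d) = t * P m)%N.
  move=> letd; rewrite -{1}[(d * m)%N]add0n big_addn addKn.
  rewrite big_nat_cond (eq_bigr (fun=> P m : nat)) => [|i /andP[/andP[_ ltit] _]].
    by rewrite -big_nat_cond sum_nat_const_nat subn0.
  by rewrite mulnC divnDMl ?divn_small //; lia.
move=> lesd; rewrite -(big_mkord xpredT (fun i => P (i %/ d)%N : nat)).
rewrite (big_cat_nat _ (leq_addr _ _)) //= block //; congr (_ + _)%N.
elim: n => [|n IHn]; first by rewrite muln0 big_geq // big_ord0 muln0.
by rewrite mulnSr (big_cat_nat _ (leq_addr _ _)) //= IHn block // big_ord_recr /= mulnDr.
Qed.

Lemma s2_widen m n : (n <= m)%N -> (\sum_(i < m) (n %/ 2 ^ i %% 2))%N = s2 n.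
Proof.
move=> lenm; rewrite /s2 -!(big_mkord xpredT (fun i => n %/ 2 ^ i %% 2)%N).
rewrite (big_cat_nat (leq0n n) lenm) /= [X in (_ + X)%N]big_nat_cond.
rewrite [X in (_ + X)%N]big1 ?addn0 // => i /andP[/andP[leni _] _].
by rewrite divn_small ?mod0n // (leq_trans (ltn_expl n (isT : (1 < 2)%N))) ?leq_pexp2l.
Qed.

Lemma s2_double n : s2 n.*2 = s2 n.
Proof.
case: n => [|n]; first by rewrite /s2 big_ord0.
rewrite -[RHS](s2_widen (m := n.*2.+1)); last by rewrite ltnS -addnn leq_addr.
rewrite {1}/s2 (_ : n.+1.*2 = n.*2.+2) // big_ord_recl /=.
rewrite expn0 divn1 -doubleS modn2 odd_double add0n.
by apply: eq_bigr => i _; rewrite /bump add1n expnS divnMA -muln2 mulnK.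
Qed.

Lemma s2_doubleS n : s2 n.*2.+1 = (s2 n).+1.
Proof.
rewrite -[in RHS](s2_widen (m := n.*2)); last by rewrite -addnn leq_addr.
rewrite {1}/s2 big_ord_recl expn0 divn1 modn2 /= odd_double add1n.
congr _.+1; apply: eq_bigr => i _; rewrite /bump add1n expnS divnMA.
congr (_ %/ _ %% _)%N.
by rewrite -addn1 -muln2 divnMDl // divn_small // addn0.
Qed.

Lemma tm_double n : (tm n.*2)%:R = (tm n)%:R :> 'F_2.
Proof. by rewrite /tm s2_double. Qed.

Lemma tm_doubleS n : (tm n.*2.+1)%:R = (tm n)%:R + 1 :> 'F_2.
Proof. by rewrite /tm !Fp_nat_mod // s2_doubleS mulrSr. Qed.

Definition geom_trunc (L : nat) : P2 := \poly_(i < L) 1.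

Lemma geom_truncE L : eqmodX L ((1 + 'X) * geom_trunc L) 1.
Proof.
apply/eqmodXP => -[|i] ltiL; rewrite mulrDl mul1r coefD coefXM /geom_trunc.
  by rewrite !coef_poly ltiL coef1 addr0.
by rewrite !coef_poly ltiL coef1 /= (ltn_trans _ ltiL) //; apply/val_inj.
Qed.

Lemma Ftrunc_split L : eqmodX L (Ftrunc L)
  ((1 + 'X) * (Ftrunc L \Po 'X^2) + 'X * (geom_trunc L \Po 'X^2)).
Proof.
apply/eqmodXP => i ltiL; rewrite mulrDl mul1r !coefD !coefXM !coef_comp_poly_Xn //.
rewrite /Ftrunc /geom_trunc !coef_poly ltiL.
rewrite -(odd_double_half i) in ltiL *; move: (i./2) ltiL => j.
have ltjL b : (b + j.*2 < L)%N -> (j < L)%N by move/(leq_ltn_trans _); apply; lia.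
case: (odd i) => /= ltiL; rewrite ?add1n ?add0n !dvdn2 /= ?odd_double /=.
  by rewrite !divn2 doubleK (ltjL true) // tm_doubleS add0r addrC.
rewrite !divn2 doubleK (ltjL false) // tm_double.
by case: j {ltiL ltjL} => [|j] /=; rewrite ?odd_double !addr0.
Qed.

Lemma Ftrunc_eqn L :
  eqmodX L ((1 + 'X) ^+ 2 * Ftrunc L) ((1 + 'X) ^+ 3 * Ftrunc L ^+ 2 + 'X).
Proof.
rewrite /eqmodX (eqmodXM erefl (Ftrunc_split L)) -!sqr_polyF2 -/(eqmodX _ _ _).
have -> : (1 + 'X) ^+ 2 * ((1 + 'X) * Ftrunc L ^+ 2 + 'X * geom_trunc L ^+ 2)
  = (1 + 'X) ^+ 3 * Ftrunc L ^+ 2 + 'X * ((1 + 'X) * geom_trunc L) ^+ 2 by ring.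
apply: eqmodXD => //; rewrite -[X in eqmodX _ _ X]mulr1.
rewrite -[X in eqmodX _ _ (_ * X)](expr1n _ 2).
by apply: eqmodXM erefl _; apply: eqmodXX; apply: geom_truncE.
Qed.

Section InverseSeries.

Variable c : nat -> 'F_2.
Hypothesis c0 : c 0%N = 0.
Hypothesis Fc_id :
  forall n : nat, (Ftrunc n.+1 \Po ser_trunc c n.+1)`_n = (n == 1%N)%:R.

Lemma ser_trunc_coef0 L : (ser_trunc c L)`_0 = 0.
Proof. by rewrite coef_poly; case: ifP. Qed.

Lemma Ftrunc_comp_ser L : eqmodX L (Ftrunc L \Po ser_trunc c L) 'X.
Proof.
apply/eqmodXP => n ltnL; rewrite coefX -Fc_id.
have /eqmodXP -> // :
  eqmodX n.+1 (Ftrunc L \Po ser_trunc c L) (Ftrunc n.+1 \Po ser_trunc c n.+1).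
by apply: eqmodX_comp; [exact: ser_trunc_coef0 | exact: eqmodX_poly..].
Qed.

Lemma ser_trunc_residual L : eqmodX L (inv_residual (ser_trunc c L)) 0.
Proof.
set C := ser_trunc c L; have FC := Ftrunc_comp_ser L.
have := eqmodX_comp (ser_trunc_coef0 L) (Ftrunc_eqn L) erefl.
rewrite !(rmorphXn, rmorphM, rmorphD, rmorph1) /= comp_polyX -/C => eqnC.
rewrite /inv_residual -addrA -opprD; apply/eqmodX_subr0.
apply: etrans (eqmodXM erefl (esym FC)) (etrans eqnC _).
exact: eqmodXD (eqmodXM erefl (eqmodXX 2 FC)) erefl.
Qed.

End InverseSeries.

Section BinaryToBase4.

Variable b : nat -> nat.
Hypothesis b0 : b 0%N = 0%N.
Hypothesis b_double : forall n : nat, b n.*2 = (4 * b n)%N.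
Hypothesis b_doubleS : forall n : nat, b n.*2.+1 = (4 * b n + 2)%N.

Lemma b_ltS n : (b n < b n.+1)%N.
Proof.
elim/ltn_ind: n => n IHn; rewrite -(odd_double_half n) in IHn *.
case: (odd n) IHn => /= IHn; last by rewrite b_double b_doubleS; lia.
have : (b n./2 < b n./2.+1)%N by apply: IHn; rewrite ltnS -addnn leq_addr.
by rewrite add1n -doubleS b_double b_doubleS; lia.
Qed.

Lemma b_homo : {homo b : m n / (m < n)%N}.
Proof. exact: homo_ltn ltn_trans b_ltS. Qed.

Lemma ltn_b m n : (b m < b n)%N = (m < n)%N.
Proof. by rewrite !ltnNge (leq_mono b_homo). Qed.

Lemma b_inj : injective b.
Proof. exact/incn_inj/leq_mono/b_homo. Qed.

Lemma leq_b n : (n <= b n)%N.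
Proof. by elim: n => [//|n IHn]; apply: leq_ltn_trans IHn (b_ltS n). Qed.

Definition b_range (m : nat) : bool := [exists k : 'I_m.+1, b k == m].

Lemma b_rangeP m : reflect (exists k, b k = m) (b_range m).
Proof.
apply: (iffP existsP) => [[k /eqP bk] | [k bk]]; first by exists k.
have ltkm : (k < m.+1)%N by rewrite ltnS -bk leq_b.
by exists (Ordinal ltkm); apply/eqP.
Qed.

Lemma b_range0 : b_range 0.
Proof. by apply/b_rangeP; exists 0%N. Qed.

Lemma b_range_b k : b_range (b k).
Proof. by apply/b_rangeP; exists k. Qed.

Lemma sum_b_range k : (\sum_(j < b k) b_range j)%N = k.
Proof.
elim: k => [|k IHk]; first by rewrite b0 big_ord0.
have ltk := b_ltS k.
rewrite -(big_mkord xpredT (fun j => b_range j : nat)) (big_cat_nat _ (ltnW ltk)) //=.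
rewrite big_mkord IHk big_ltn //= b_range_b.
rewrite big_nat_cond big1 ?addn0 ?addn1 // => j /andP[/andP[ltkj ltjk] _].
case: b_rangeP => // -[k' bk']; rewrite -bk' !ltn_b in ltkj ltjk.
lia.
Qed.

Definition Bpoly (M : nat) : P2 := \sum_(k < M) 'X^(b k).

Lemma coef_Bpoly M m : (m < M)%N -> (Bpoly M)`_m = (b_range m)%:R.
Proof.
move=> ltmM; rewrite coef_sum; case: b_rangeP => [[k bk] | no_k]; last first.
  by rewrite big1 // => k _; rewrite coefXn; case: eqP => // mk; case: no_k; exists k.
have ltkM : (k < M)%N by rewrite (leq_ltn_trans _ ltmM) // -bk leq_b.
rewrite (bigD1 (Ordinal ltkM)) //= coefXn -bk eqxx big1 ?addr0 //.
move=> j /eqP/val_eqP /= neq_jk.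
by rewrite coefXn (inj_eq b_inj) eq_sym (negbTE neq_jk).
Qed.

Lemma Bpoly_double M : Bpoly M.*2 = (1 + 'X^2) * (Bpoly M \Po 'X^4).
Proof.
elim: M => [|M IHM]; first by rewrite /Bpoly !big_ord0 comp_poly0 mulr0.
rewrite doubleS /Bpoly !big_ord_recr /= -/(Bpoly M.*2) -/(Bpoly M) IHM.
rewrite b_double b_doubleS rmorphD /= comp_Xn_poly -exprM exprD; ring.
Qed.

Lemma Bpoly_widen M N : (M <= N)%N -> eqmodX M (Bpoly N) (Bpoly M).
Proof.
move=> leMN; apply/eqmodXP => i ltiM.
have ltiN : (i < N)%N by apply: leq_trans leMN.
by rewrite !coef_Bpoly.
Qed.

Lemma Bpoly_eqn M : eqmodX M (Bpoly M) ((1 + 'X^2) * Bpoly M ^+ 4).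
Proof.
by rewrite exp4_polyF2 -Bpoly_double; apply/esym/Bpoly_widen; rewrite -addnn leq_addr.
Qed.

Lemma Bpoly_coef0 M : (Bpoly M.+1)`_0 = 1.
Proof. by rewrite coef_Bpoly // b_range0. Qed.

Lemma Bpoly_inv M : eqmodX M.+1 ((1 + 'X^2) * Bpoly M.+1 ^+ 3) 1.
Proof.
set B := Bpoly M.+1; apply/eqmodX_subr0.
apply: (eqmodX_cancel (u := B)); first by rewrite Bpoly_coef0 oner_neq0.
rewrite mulrBl mul1r -mulrA -exprSr; apply/eqmodX_subr0.
exact/esym/Bpoly_eqn.
Qed.

Definition blocks (M : nat) : P2 := (1 + 'X) ^+ 3 * (Bpoly M \Po 'X^4).

Definition Gpoly (M : nat) : P2 := drop_poly 1 (blocks M) - 1.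

Lemma coef_blocks M n : (n %/ 4 < M)%N -> (blocks M)`_n = (b_range (n %/ 4))%:R.
Proof.
have cube : (1 + 'X) ^+ 3 = \sum_(j < 4) 'X^j :> P2.
  rewrite !big_ord_recr big_ord0 /= add0r expr0 expr1.
  have -> : (1 + 'X) ^+ 3 = 1 + 'X + 'X^2 + 'X^3 + 2%:R * ('X + 'X^2) :> P2 by ring.
  by rewrite (pcharf0 pchar2_polyF2) mul0r addr0.
by move=> ltnM; rewrite /blocks cube mulr_suml coef_sum_Xn_comp // coef_Bpoly.
Qed.

Lemma coef_Gpoly M i : (0 < i)%N -> (i.+1 %/ 4 < M)%N ->
  (Gpoly M)`_i = (b_range (i.+1 %/ 4))%:R.
Proof.
by case: i => // i _ ltiM; rewrite coefB coef_drop_poly coef1 subr0 addn1 coef_blocks.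
Qed.

Lemma Gpoly_mulX M : 'X * (1 + Gpoly M.+1) = 1 + blocks M.+1.
Proof.
rewrite /Gpoly addrC subrK mulrC.
have W0 : take_poly 1 (blocks M.+1) = 1.
  by apply/polyP => -[|i]; rewrite coef_take_poly coef1 //= coef_blocks // b_range0.
rewrite -{2}(poly_take_drop 1 (blocks M.+1)) W0 expr1 addrA.
by rewrite (addrr_pchar2 pchar2_polyF2) add0r.
Qed.

Lemma Gpoly_residual L : eqmodX L (inv_residual (Gpoly L.+1)) 0.
Proof.
set G := Gpoly L.+1; set W := blocks L.+1; set B := Bpoly L.+1.
have two0 : 2%:R = 0 :> P2 by rewrite (pcharf0 pchar2_polyF2).
have W3 : eqmodX L.+1 (W ^+ 3) (1 + 'X).
  have -> : W ^+ 3 = (1 + 'X) * ((1 + 'X) ^+ 2 * B ^+ 3) ^+ 4.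
    by rewrite /W /blocks -exp4_polyF2 -/B; ring.
  have -> : (1 + 'X) ^+ 2 = 1 + 'X^2 + 2%:R * 'X :> P2 by ring.
  rewrite two0 mul0r addr0 -[X in eqmodX _ _ X]mulr1.
  rewrite -[X in eqmodX _ _ (_ * X)](expr1n _ 4).
  by apply: eqmodXM erefl _; apply: eqmodXX; apply: Bpoly_inv.
have Z : eqmodX L.+1 ((1 + W) ^+ 3 + (1 + W) ^+ 2 + (1 + W) + 'X) 0.
  have -> : (1 + W) ^+ 3 + (1 + W) ^+ 2 + (1 + W) + 'X
    = W ^+ 3 - (1 + 'X) + 2%:R * (2%:R * W ^+ 2 + 3%:R * W + 2%:R + 'X) by ring.
  by rewrite two0 mul0r addr0; apply/eqmodX_subr0.
(* With [Z := X (1 + G) = 1 + W], [X^2 inv_residual G = X (Z^3 + Z^2 + Z + X)]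
   in characteristic 2. *)
apply/(eqmodX_mulXn2 2); rewrite mulr0.
have -> : 'X^2 * inv_residual G = 'X * ((('X * (1 + G)) ^+ 3 + ('X * (1 + G)) ^+ 2
   + 'X * (1 + G) + 'X)) - 2%:R * ('X * (('X * (1 + G)) ^+ 3 + 'X * (1 + G))).
  by rewrite /inv_residual; ring.
rewrite two0 mul0r subr0 Gpoly_mulX -/W -[X in eqmodX _ _ X](mulr0 'X).
exact/(eqmodX_mulXn2 1).
Qed.

Section Enumeration.

Variable c : nat -> 'F_2.
Hypothesis hc : is_comp_inverse c.

Lemma c_coef i : (0 < i)%N -> c i = (b_range (i.+1 %/ 4))%:R.
Proof.
(* Only [F(G) = X] is needed: a one-sided inverse already determines [G]. *)
move=> i_gt0; have [c0 [Fc_id _]] := hc.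
have := inv_residual_uniq (ser_trunc_residual c0 Fc_id i.+1) (Gpoly_residual i.+1).
move/eqmodXP/(_ i (ltnSn i)); rewrite coef_poly ltnSn => ->.
by rewrite coef_Gpoly // ltnS leq_div.
Qed.

Lemma sum_c_eq1 m : (0 < m)%N ->
  (\sum_(i < m.+1) b_range (i %/ 4))%N
    = (\sum_(i < m) ((0 < i) && (c i == 1%R))).+2%N.
Proof.
case: m => // m _; rewrite big_ord_recl big_ord_recl [in RHS]big_ord_recl /bump /=.
rewrite div0n divn_small // b_range0 add0n.
rewrite (eq_bigr (fun i : 'I_m => (c (bump 0 i) == 1%R) : nat)) // => i _.
by rewrite /bump !add1n c_coef //; case: b_range; rewrite ?eqxx // eq_sym oner_eq0.
Qed.

Lemma card_c_eq1 m :
  #|[set i : 'I_m | (1 <= (i : nat))%N && (c i == 1)]|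
    = (\sum_(i < m) ((0 < i) && (c i == 1%R)))%N.
Proof.
rewrite cardsE -sum1_card big_mkcond /=.
by apply: eq_bigr => i _; rewrite unfold_in; case: (_ && _).
Qed.

Lemma enum_at_b k s : (s < 4)%N -> (0 < 4 * k + s)%N ->
  enum_at c (4 * k + s).-1 (4 * b k + s).-1.
Proof.
move=> lt_s4 pos; have le_kb := leq_b k; rewrite /enum_at.
case: eqP => [j0 | /eqP j_neq0].
  have [-> ->] : k = 0%N /\ s = 1%N by lia.
  by rewrite b0.
have m_pos : (0 < (4 * b k + s).-1)%N by lia.
have m_succ : (4 * b k + s).-1.+1 = (4 * b k + s)%N by lia.
have div_m : ((4 * b k + s) %/ 4)%N = b k.
  by rewrite mulnC divnMDl // divn_small // addn0.
split => //; first by rewrite c_coef // m_succ div_m b_range_b.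
have := sum_c_eq1 m_pos; rewrite card_c_eq1 m_succ sum_divn ?(ltnW lt_s4) //.
by rewrite sum_b_range b_range_b muln1; lia.
Qed.

End Enumeration.

End BinaryToBase4.

Theorem mainTheorem5 (c : nat -> 'F_2) (b : nat -> nat)
  (hc : is_comp_inverse c)
  (hb0 : b 0%N = 0%N)
  (hbe : forall n : nat, b n.*2 = (4 * b n)%N)
  (hbo : forall n : nat, b n.*2.+1 = (4 * b n + 2)%N)
  (k : nat) (r : int) (hr : r \in [:: -1; 0; 1; 2])
  (hkr : 0 <= (4 * k)%:Z + r) :
  0 <= (4 * b k)%:Z + r /\
  enum_at c (absz ((4 * k)%:Z + r)) (absz ((4 * b k)%:Z + r)).
Proof.
have [s lt_s4 r_eq] : exists2 s, (s < 4)%N & r = s%:Z - 1.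
  move: hr; rewrite !inE => /or4P[] /eqP ->.
  - by exists 0%N.
  - by exists 1%N.
  - by exists 2%N.
  - by exists 3%N.
subst r.
have le_kb := leq_b hb0 hbe hbo k.
have pos : (0 < 4 * k + s)%N by lia.
have -> : (4 * k)%:Z + (s%:Z - 1) = (4 * k + s).-1%:Z by lia.
have -> : (4 * b k)%:Z + (s%:Z - 1) = (4 * b k + s).-1%:Z by lia.
by split=> //; apply: enum_at_b.
Qed.
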